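(* Let $X$ be a nonempty set, $\circ:X\times X\to X$ a binary operation, and $p,q>0$ constants. If $f,g:X\to\mathbb{R}$ are $(\circ,p,q)$-convex functions satisfying \[ 0\leq \max(f(x),g(x))\qquad (x\in X), \] then there exists $\lambda\in[0,1]$ such that \[ 0\leq \lambda f(x)+(1-\lambda)g(x)\qquad (x\in X). \]
   Context: Given a nonempty set $X$, a binary operation $\circ:X\times X\to X$ and constants $p,q>0$, a function $f:X\to\mathbb{R}$ is called $(\circ,p,q)$-convex if $f(x\circ y)\leq p f(x)+q f(y)$ for all $x,y\in X$. *)

From Stdlib Require Import Reals.
Open Scope R_scope.

Definition opconvex {X : Type} (op : X -> X -> X) (p q : R) (f : X -> R) : Prop :=
  forall x y : X, f (op x y) <= p * f x + q * f y.

(* Fix x, y with f x < 0 and g y < 0, hence g x >= 0 and f y >= 0.  Starting from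
   z = x and z = y and applying the two convexity inequalities, one obtains points z with
   f z <= c ((1 - w) f x + w f y) and g z <= c ((1 - w) g x + w g y) for some c > 0, for a
   set of weights w containing 0 and 1 and closed under w1, w2 |-> (p w1 + q w2) / (p + q);
   such a set is dense in [0, 1].  As max (f z) (g z) >= 0, no such w makes both affine
   functions negative, which forces f x g y <= g x f y.  This cross inequality says that
   every lower constraint on lam coming from a point with g < 0 lies below every upper
   constraint coming from a point with f < 0, and a lam in between does the job. *)

From Stdlib Require Import Reals Lra Psatz Classical.
Open Scope R_scope.

Lemma Rmax_nonneg_snd (a b : R) : 0 <= Rmax a b -> a < 0 -> 0 <= b.
Proof. intros h ha; destruct (proj1 (Rmax_Rle _ _ _) h); lra. Qed.

Lemma Rmax_nonneg_fst (a b : R) : 0 <= Rmax a b -> b < 0 -> 0 <= a.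
Proof. intros h hb; destruct (proj1 (Rmax_Rle _ _ _) h); lra. Qed.

Definition root_weight (a b : R) : R := b / (b - a).

Lemma root_weight_spec (a b lam : R) :
  a <> b -> lam * a + (1 - lam) * b = (b - a) * (root_weight a b - lam).
Proof. intros hab; unfold root_weight; field; lra. Qed.

Lemma combo_nonneg_iff_root_weight_le (a b lam : R) :
  b < a -> 0 <= lam * a + (1 - lam) * b <-> root_weight a b <= lam.
Proof. intros hba; rewrite root_weight_spec by lra; split; intros; nra. Qed.

Lemma combo_nonneg_iff_le_root_weight (a b lam : R) :
  a < b -> 0 <= lam * a + (1 - lam) * b <-> lam <= root_weight a b.
Proof. intros hab; rewrite root_weight_spec by lra; split; intros; nra. Qed.

Lemma root_weight_sub (a b a' b' : R) :
  a <> b -> a' <> b' ->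
  (root_weight a' b' - root_weight a b) * ((b - a) * (b' - a')) = b * a' - a * b'.
Proof. intros hab hab'; unfold root_weight; field; lra. Qed.

Lemma root_weight_le_of_cross (a b a' b' : R) :
  a < 0 <= b -> b' < 0 <= a' -> a * b' <= b * a' -> root_weight a' b' <= root_weight a b.
Proof.
  intros hab hab' hcross.
  pose proof (root_weight_sub a b a' b' ltac:(lra) ltac:(lra)) as E.
  assert (hden : (b - a) * (b' - a') < 0) by nra.
  nra.
Qed.

Lemma separation_in_unit_interval (A B : R -> Prop) :
  (forall a, A a -> a <= 1) -> (forall b, B b -> 0 <= b) ->
  (forall a b, A a -> B b -> a <= b) ->
  exists t, 0 <= t <= 1 /\ (forall a, A a -> a <= t) /\ (forall b, B b -> t <= b).
Proof.
  intros hA1 hB0 hAB.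
  set (E := fun r => r = 0 \/ A r).
  assert (hE1 : is_upper_bound E 1) by (intros r [-> | hr]; [lra | auto]).
  destruct (completeness E (ex_intro _ 1 hE1) (ex_intro _ 0 (or_introl eq_refl)))
    as [t [ht_ub ht_lub]].
  exists t; repeat split.
  - apply ht_ub; left; reflexivity.
  - exact (ht_lub 1 hE1).
  - intros a ha; apply ht_ub; right; exact ha.
  - intros b hb; apply ht_lub; intros r [-> | hr]; eauto.
Qed.

Section MixClosed.

Variables (S : R -> Prop) (t : R).
Hypotheses (ht : 0 < t < 1) (S0 : S 0) (S1 : S 1)
  (S_mix : forall a b, S a -> S b -> S ((1 - t) * a + t * b)).

Lemma mix_closed_bracket (u v : R) :
  0 <= u -> u < v -> v <= 1 -> (forall w, S w -> w <= u \/ v <= w) ->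
  forall n, exists l h, S l /\ S h /\ l <= u /\ v <= h /\ h - l <= Rmax t (1 - t) ^ n.
Proof.
  intros hu huv hv hsplit n; induction n as [|n (l & h & Sl & Sh & hl & hh & hgap)].
  - exists 0, 1; repeat split; auto; simpl; lra.
  - set (m := (1 - t) * l + t * h).
    assert (ht_mu : t <= Rmax t (1 - t)) by apply Rmax_l.
    assert (ht_mu' : 1 - t <= Rmax t (1 - t)) by apply Rmax_r.
    assert (hmu_n : 0 <= Rmax t (1 - t) ^ n) by lra.
    assert (Sm : S m) by (apply S_mix; assumption).
    simpl.
    destruct (hsplit m Sm) as [hm | hm].
    + exists m, h; repeat split; auto.
      replace (h - m) with ((1 - t) * (h - l)) by (unfold m; ring).
      apply Rmult_le_compat; lra.
    + exists l, m; repeat split; auto.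
      replace (m - l) with (t * (h - l)) by (unfold m; ring).
      apply Rmult_le_compat; lra.
Qed.

Lemma mix_closed_meets_interval (u v : R) :
  0 <= u -> u < v -> v <= 1 -> exists w, S w /\ u < w < v.
Proof.
  intros hu huv hv; apply NNPP; intros hnone.
  assert (hsplit : forall w, S w -> w <= u \/ v <= w).
  { intros w Sw; destruct (Rle_or_lt w u) as [|hwu]; [now left|].
    destruct (Rle_or_lt v w) as [|hwv]; [now right|].
    exfalso; apply hnone; exists w; auto. }
  assert (hmu : Rabs (Rmax t (1 - t)) < 1).
  { rewrite Rabs_right by (apply Rle_ge, Rle_trans with t; [lra | apply Rmax_l]).
    apply Rmax_lub_lt; lra. }
  destruct (pow_lt_1_zero _ hmu (v - u)) as [N hN]; [lra|].
  destruct (mix_closed_bracket u v hu huv hv hsplit N) as (l & h & _ & _ & hl & hh & hgap).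
  pose proof (Rle_abs (Rmax t (1 - t) ^ N)).
  specialize (hN N (Nat.le_refl N)); lra.
Qed.

End MixClosed.

Section Reachable.

Variables (X : Type) (op : X -> X -> X) (p q : R) (f g : X -> R) (x y : X).
Hypotheses (hp : 0 < p) (hq : 0 < q) (hf : opconvex op p q f) (hg : opconvex op p q g).

Definition reachable (a b : R) : Prop :=
  exists z, f z <= a * f x + b * f y /\ g z <= a * g x + b * g y.

Lemma reachable_op (a1 b1 a2 b2 : R) :
  reachable a1 b1 -> reachable a2 b2 -> reachable (p * a1 + q * a2) (p * b1 + q * b2).
Proof.
  intros (z1 & hf1 & hg1) (z2 & hf2 & hg2); exists (op z1 z2).
  specialize (hf z1 z2); specialize (hg z1 z2); split; nra.
Qed.

Lemma reachable_mul_sum (a b : R) :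
  reachable a b -> reachable ((p + q) * a) ((p + q) * b).
Proof. intros hab; rewrite !Rmult_plus_distr_r; exact (reachable_op _ _ _ _ hab hab). Qed.

Lemma reachable_scale (a b : R) (n : nat) :
  reachable a b -> reachable ((p + q) ^ n * a) ((p + q) ^ n * b).
Proof.
  intros hab; induction n as [|n IH]; simpl.
  - now rewrite !Rmult_1_l.
  - rewrite !Rmult_assoc; exact (reachable_mul_sum _ _ IH).
Qed.

Definition reachable_weight (w : R) : Prop :=
  exists n, reachable ((p + q) ^ n * (1 - w)) ((p + q) ^ n * w).

Lemma reachable_weight_0 : reachable_weight 0.
Proof. exists O; exists x; simpl; lra. Qed.

Lemma reachable_weight_1 : reachable_weight 1.
Proof. exists O; exists y; simpl; lra. Qed.

Lemma reachable_weight_mix (w1 w2 : R) :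
  reachable_weight w1 -> reachable_weight w2 ->
  reachable_weight ((1 - q / (p + q)) * w1 + q / (p + q) * w2).
Proof.
  intros [n1 h1] [n2 h2]; exists (S (n1 + n2)).
  (* rescale both witnesses to the common factor (p + q) ^ (n1 + n2) before combining *)
  set (s := p + q); set (t := q / s).
  replace (s ^ S (n1 + n2) * (1 - ((1 - t) * w1 + t * w2)))
    with (p * (s ^ n2 * (s ^ n1 * (1 - w1))) + q * (s ^ n1 * (s ^ n2 * (1 - w2))))
    by (unfold t, s; simpl; rewrite pow_add; field; lra).
  replace (s ^ S (n1 + n2) * ((1 - t) * w1 + t * w2))
    with (p * (s ^ n2 * (s ^ n1 * w1)) + q * (s ^ n1 * (s ^ n2 * w2)))
    by (unfold t, s; simpl; rewrite pow_add; field; lra).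
  apply reachable_op; apply reachable_scale; assumption.
Qed.

Hypothesis hfg : forall z, 0 <= Rmax (f z) (g z).

Lemma reachable_weight_combo_nonneg (w : R) :
  reachable_weight w -> 0 <= w * f y + (1 - w) * f x \/ 0 <= w * g y + (1 - w) * g x.
Proof.
  intros [n (z & hfz & hgz)].
  assert (hs : 0 < (p + q) ^ n) by (apply pow_lt; lra).
  destruct (proj1 (Rmax_Rle _ _ _) (hfg z)); [left | right]; nra.
Qed.

End Reachable.

Lemma opconvex_pair_cross_le (X : Type) (op : X -> X -> X) (p q : R)
  (hp : 0 < p) (hq : 0 < q) (f g : X -> R)
  (hf : opconvex op p q f) (hg : opconvex op p q g)
  (hfg : forall z : X, 0 <= Rmax (f z) (g z)) (x y : X) :
  f x < 0 -> g y < 0 -> f x * g y <= g x * f y.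
Proof.
  intros hfx hgy.
  pose proof (Rmax_nonneg_snd _ _ (hfg x) hfx) as hgx.
  pose proof (Rmax_nonneg_fst _ _ (hfg y) hgy) as hfy.
  apply Rnot_lt_le; intros hcross.
  set (u := root_weight (g y) (g x)); set (v := root_weight (f y) (f x)).
  assert (hu : 0 <= u) by (apply (combo_nonneg_iff_le_root_weight (g y) (g x) 0); lra).
  assert (hv : v <= 1) by (apply (combo_nonneg_iff_root_weight_le (f y) (f x) 1); lra).
  assert (huv : u < v).
  { pose proof (root_weight_sub (g y) (g x) (f y) (f x) ltac:(lra) ltac:(lra)) as E.
    fold u v in E.
    assert (hden : (g x - g y) * (f x - f y) < 0) by nra.
    nra. }
  destruct (mix_closed_meets_interval (reachable_weight X p q f g x y) (q / (p + q)))
    with u v as (w & hw & huw & hwv); auto.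
  - split; [apply Rdiv_lt_0_compat | apply Rmult_lt_reg_r with (p + q); field_simplify]; lra.
  - exact (reachable_weight_0 X p q f g x y).
  - exact (reachable_weight_1 X p q f g x y).
  - exact (reachable_weight_mix X op p q f g x y hp hq hf hg).
  - destruct (reachable_weight_combo_nonneg X p q f g x y hp hq hfg w hw) as [hF | hG].
    + apply (combo_nonneg_iff_root_weight_le (f y) (f x) w) in hF; fold v in hF; lra.
    + apply (combo_nonneg_iff_le_root_weight (g y) (g x) w) in hG; fold u in hG; lra.
Qed.

Theorem theorem3p5 (X : Type) (x0 : X) (op : X -> X -> X) (p q : R)
  (hp : 0 < p) (hq : 0 < q) (f g : X -> R)
  (hf : opconvex op p q f) (hg : opconvex op p q g)
  (hfg : forall x : X, 0 <= Rmax (f x) (g x)) :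
  exists lam : R, 0 <= lam <= 1 /\
    forall x : X, 0 <= lam * f x + (1 - lam) * g x.
Proof.
  set (r := fun z => root_weight (f z) (g z)).
  destruct (separation_in_unit_interval
              (fun a => exists y, g y < 0 /\ a = r y) (fun b => exists x, f x < 0 /\ b = r x))
    as (lam & hlam & hlow & hup).
  - intros a (y & hgy & ->); pose proof (Rmax_nonneg_fst _ _ (hfg y) hgy).
    apply (combo_nonneg_iff_root_weight_le (f y) (g y) 1); lra.
  - intros b (x & hfx & ->); pose proof (Rmax_nonneg_snd _ _ (hfg x) hfx).
    apply (combo_nonneg_iff_le_root_weight (f x) (g x) 0); lra.
  - intros a b (y & hgy & ->) (x & hfx & ->).
    pose proof (Rmax_nonneg_fst _ _ (hfg y) hgy); pose proof (Rmax_nonneg_snd _ _ (hfg x) hfx).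
    apply root_weight_le_of_cross; try lra.
    exact (opconvex_pair_cross_le X op p q hp hq f g hf hg hfg x y hfx hgy).
  - exists lam; split; [exact hlam|]; intros z.
    destruct (Rlt_or_le (g z) 0) as [hgz | hgz].
    + pose proof (Rmax_nonneg_fst _ _ (hfg z) hgz).
      apply combo_nonneg_iff_root_weight_le; [lra|]; apply hlow; eauto.
    + destruct (Rlt_or_le (f z) 0) as [hfz | hfz]; [|nra].
      apply combo_nonneg_iff_le_root_weight; [lra|]; apply hup; eauto.
Qed.
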